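(* For a set $(X,=_X)$ let $\varepsilon\boldsymbol X:=(X,=_{(X,\mathbb F(X))},\neq_{(X,\mathbb F(X))};\mathbb F(X))$. (i) The identity assignment $i_X:(X,=_X)\to(X,=_{(X,\mathbb F(X))})$ is a function, and for every completely separated set $\boldsymbol Y=(Y,=_Y,\neq_Y;G)$ and every function $h:(X,=_X)\to(Y,=_Y)$ there is a unique strongly extensional function $\varepsilon h:(X,=_{(X,\mathbb F(X))},\neq_{(X,\mathbb F(X))})\to(Y,=_Y,\neq_Y)$ with $\varepsilon h\circ i_X=h$. (ii) If $(X,=_X,\neq_X;F)$ is a completely separated set, then the identity assignment is a surjective strongly extensional function from $\varepsilon\boldsymbol X$ (the free completely separated set on $(X,=_X)$) onto $(X,=_X,\neq_X)$; i.e. every completely separated set is a quotient of the free completely separated set on its underlying set. (iii) Let $\mathrm{Free}:\mathbf{Set}\to\mathbf{SetComplSep}$ be given by $\mathrm{Free}(X,=_X):=\varepsilon\boldsymbol X$ and, for a function $f:X\to Y$, $\mathrm{Free}(f):=\varepsilon(i_Y\circ f):\varepsilon\boldsymbol X\to\varepsilon\boldsymbol Y$, and let $\mathrm{Frg}:\mathbf{SetComplSep}\to\mathbf{Set}$ be the forgetful functor $(X,=_X,\neq_X;F)\mapsto(X,=_X)$, $h\mapsto h$. Then $\mathrm{Free}$ is left adjoint to $\mathrm{Frg}$.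
   Context: Setting: constructive (Bishop-style) mathematics with intuitionistic logic. A set $(X,=_X)$ carries an equality; a function is an assignment respecting equalities. $\mathbb F(X)$ is the set of all functions $X\to\mathbb R$ with pointwise equality. $a\neq_{\mathbb R}b:\Leftrightarrow|a-b|>0$. An inequality on $(X,=_X)$ satisfies $x=_Xy\ \&\ x\neq_Xy\Rightarrow\bot$. A function between sets with inequality is strongly extensional if $f(x)\neq f(y)\Rightarrow x\neq y$. Induced relations for $F\subseteq\mathbb F(X)$: $x=_{(X,F)}x':\Leftrightarrow\forall_{f\in F}f(x)=_{\mathbb R}f(x')$, $x\neq_{(X,F)}x':\Leftrightarrow\exists_{f\in F}f(x)\neq_{\mathbb R}f(x')$. A completely separated set $(X,=_X,\neq_X;F)$: $F$ an extensional subset of $\mathbb F(X)$ (defined by a property respecting $=_{\mathbb F(X)}$), $x\neq_Xx'\Leftrightarrow x\neq_{(X,F)}x'$, and $x=_{(X,F)}x'\Rightarrow x=_Xx'$. $\mathbf{Set}$ is the category of sets and functions; $\mathbf{SetComplSep}$ is the category whose objects are completely separated sets and whose arrows are strongly extensional functions (with respect to the given inequalities). *)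

(* Bishop sets are modelled as setoids; R is Stdlib's real line. *)
From Stdlib Require Import Reals RelationClasses.
Open Scope R_scope.

Record Setoid := mkSetoid {
  carrier :> Type;
  seq : carrier -> carrier -> Prop;
  seq_equiv : Equivalence seq }.

Record Fun (A B : Setoid) := mkFun {
  app :> A -> B;
  app_proper : forall x y, seq A x y -> seq B (app x) (app y) }.
Arguments app {A B}.
Arguments app_proper {A B}.

Definition fun_eq {A B : Setoid} (f g : Fun A B) : Prop :=
  forall x, seq B (f x) (g x).

Definition fcomp {A B C : Setoid} (g : Fun B C) (f : Fun A B) : Fun A C.
Proof.
  refine (mkFun A C (fun x => g (f x)) _).
  intros x y H. apply (app_proper g), (app_proper f), H.
Defined.

Definition fid (A : Setoid) : Fun A A.
Proof. refine (mkFun A A (fun x => x) _). intros x y H; exact H. Defined.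

Definition RS : Setoid := mkSetoid R eq eq_equivalence.

Definition FF (X : Setoid) : Type := Fun X RS.

Definition neqR (a b : R) : Prop := Rabs (a - b) > 0.

Definition ind_eq (X : Setoid) (F : FF X -> Prop) (x y : X) : Prop :=
  forall f : FF X, F f -> app f x = app f y.
Definition ind_neq (X : Setoid) (F : FF X -> Prop) (x y : X) : Prop :=
  exists f : FF X, F f /\ neqR (app f x) (app f y).

Definition extensional_subset (X : Setoid) (F : FF X -> Prop) : Prop :=
  forall f g : FF X, fun_eq f g -> F f -> F g.

Record CSSet := mkCSSet {
  cs_set : Setoid;
  cs_neq : cs_set -> cs_set -> Prop;
  cs_F : FF cs_set -> Prop;
  cs_F_ext : extensional_subset cs_set cs_F;
  cs_neq_iff : forall x y, cs_neq x y <-> ind_neq cs_set cs_F x y;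
  cs_sep : forall x y, ind_eq cs_set cs_F x y -> seq cs_set x y }.

Definition strongly_ext (A B : CSSet) (h : Fun (cs_set A) (cs_set B)) : Prop :=
  forall x y, cs_neq B (h x) (h y) -> cs_neq A x y.

Definition CSHom (A B : CSSet) : Type :=
  { h : Fun (cs_set A) (cs_set B) | strongly_ext A B h }.

Definition cs_comp {A B C : CSSet} (g : CSHom B C) (f : CSHom A B) : CSHom A C.
Proof.
  exists (fcomp (proj1_sig g) (proj1_sig f)).
  intros x y H. apply (proj2_sig f), (proj2_sig g), H.
Defined.

Definition all_F (X : Setoid) : FF X -> Prop := fun _ => True.

Lemma ind_eq_equiv (X : Setoid) : Equivalence (ind_eq X (all_F X)).
Proof.
  split.
  - intros x f _; reflexivity.
  - intros x y H f Hf; symmetry; apply H, Hf.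
  - intros x y z H1 H2 f Hf; rewrite (H1 f Hf); apply H2, Hf.
Qed.

Definition epsS (X : Setoid) : Setoid :=
  mkSetoid X (ind_eq X (all_F X)) (ind_eq_equiv X).

Lemma seq_ind_eq (X : Setoid) (x y : X) : seq X x y -> ind_eq X (all_F X) x y.
Proof. intros H f _. apply (app_proper f), H. Qed.

Definition iX (X : Setoid) : Fun X (epsS X) :=
  mkFun X (epsS X) (fun x => x) (seq_ind_eq X).

Definition old_of_new (X : Setoid) (g : FF (epsS X)) : FF X :=
  mkFun X RS (app g) (fun x y H => app_proper g x y (seq_ind_eq X x y H)).

Definition new_of_old (X : Setoid) (f : FF X) : FF (epsS X) :=
  mkFun (epsS X) RS (app f) (fun x y H => H f I).

Lemma eps_neq_iff (X : Setoid) (x y : X) :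
  ind_neq X (all_F X) x y <-> ind_neq (epsS X) (all_F (epsS X)) x y.
Proof.
  split.
  - intros [f [_ Hf]]. exists (new_of_old X f). split; [exact I | exact Hf].
  - intros [g [_ Hg]]. exists (old_of_new X g). split; [exact I | exact Hg].
Qed.

Lemma eps_sep (X : Setoid) (x y : X) :
  ind_eq (epsS X) (all_F (epsS X)) x y -> seq (epsS X) x y.
Proof. intros H f _. exact (H (new_of_old X f) I). Qed.

Lemma all_F_ext (X : Setoid) : extensional_subset X (all_F X).
Proof. intros f g _ _; exact I. Qed.

(* F(X) is represented by the
   predicate "all functions on (X, =_{(X,F(X))})": these are exactly the
   assignments in F(X) (see old_of_new / new_of_old). *)
Definition eps (X : Setoid) : CSSet :=
  mkCSSet (epsS X) (ind_neq X (all_F X)) (all_F (epsS X)) (all_F_ext (epsS X))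
    (eps_neq_iff X) (eps_sep X).

(* Characterization of Free(f) := ε(i_Y ∘ f): strongly extensional
   εX -> εY with Free(f) ∘ i_X = i_Y ∘ f. *)
Definition is_Free_map (Free : forall X Y : Setoid, Fun X Y -> CSHom (eps X) (eps Y))
  : Prop :=
  forall (X Y : Setoid) (f : Fun X Y),
    fun_eq (fcomp (proj1_sig (Free X Y f)) (iX X)) (fcomp (iX Y) f).

(* The whole argument rests on one observation (lemma [factor_through_eps]):
   every function h : (X,=_X) -> Y into a completely separated set Y already
   respects the coarser equality =_{(X,F(X))}, because x =_{(X,F(X))} x'
   gives g (h x) = g (h x') for every g in the defining family of Y, and Y is
   separated by that family.  The same identity assignment h is moreover
   strongly extensional out of εX, since a witness g of h x ≠_Y h x' yields
   the witness g ∘ h ∈ F(X).  This gives the lift [lift h] : εX -> Y, and as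
   i_X is the identity assignment, every arrow out of εX is determined by its
   composite with i_X, which yields uniqueness. *)

From Stdlib Require Import Reals RelationClasses.

#[local] Existing Instance seq_equiv.

(* Every arrow out of εX is the identity assignment on points, so it is
   determined (up to =_Y) by its composite with i_X. *)
Lemma eps_maps_determined_by_iX (X : Setoid) (Y : Setoid)
  (g g' : Fun (epsS X) Y) :
  fun_eq (fcomp g (iX X)) (fcomp g' (iX X)) -> fun_eq g g'.
Proof. intros H x. exact (H x). Qed.

Lemma factor_through_eps (X : Setoid) (Y : CSSet) (h : Fun X (cs_set Y))
  (x y : X) : ind_eq X (all_F X) x y -> seq (cs_set Y) (h x) (h y).
Proof.
  intros Hxy. apply cs_sep. intros g _.
  exact (Hxy (fcomp g h) I).
Qed.

Definition liftF (X : Setoid) (Y : CSSet) (h : Fun X (cs_set Y)) :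
  Fun (epsS X) (cs_set Y) :=
  mkFun (epsS X) (cs_set Y) (app h) (factor_through_eps X Y h).

(* It is strongly extensional: a separating g for h x, h y gives the
   separating function g ∘ h ∈ F(X) for x, y. *)
Lemma liftF_strongly_ext (X : Setoid) (Y : CSSet) (h : Fun X (cs_set Y)) :
  strongly_ext (eps X) Y (liftF X Y h).
Proof.
  intros x y Hneq. apply (cs_neq_iff Y) in Hneq.
  destruct Hneq as [g [_ Hg]].
  exists (fcomp g h). split; [exact I | exact Hg].
Qed.

Definition lift (X : Setoid) (Y : CSSet) (h : Fun X (cs_set Y)) :
  CSHom (eps X) Y :=
  exist _ (liftF X Y h) (liftF_strongly_ext X Y h).

Lemma lift_comp_iX (X : Setoid) (Y : CSSet) (h : Fun X (cs_set Y)) :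
  fun_eq (fcomp (proj1_sig (lift X Y h)) (iX X)) h.
Proof. intros x. reflexivity. Qed.

Lemma lift_unique (X : Setoid) (Y : CSSet) (h : Fun X (cs_set Y))
  (g : CSHom (eps X) Y) :
  fun_eq (fcomp (proj1_sig g) (iX X)) h -> fun_eq (proj1_sig g) (proj1_sig (lift X Y h)).
Proof.
  intros Hg. apply eps_maps_determined_by_iX.
  intros x. etransitivity; [exact (Hg x) | symmetry; apply lift_comp_iX].
Qed.

Lemma lift_proper (X : Setoid) (Y : CSSet) (h h' : Fun X (cs_set Y)) :
  fun_eq h h' -> fun_eq (proj1_sig (lift X Y h)) (proj1_sig (lift X Y h')).
Proof. intros H x. exact (H x). Qed.

Definition quotient_map (Z : CSSet) : CSHom (eps (cs_set Z)) Z :=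
  lift (cs_set Z) Z (fid (cs_set Z)).

Definition free_map (X Y : Setoid) (f : Fun X Y) : CSHom (eps X) (eps Y) :=
  lift X (eps Y) (fcomp (iX Y) f).

Lemma free_map_spec : is_Free_map free_map.
Proof. intros X Y f. apply lift_comp_iX. Qed.

(* Functoriality holds for any arrow assignment satisfying the
   characterising equation Free(f) ∘ i_X = i_Y ∘ f, i.e.
   Free(f) x =_{εY} f x for every x. *)
Section FreeFunctor.

Variable Free : forall X Y : Setoid, Fun X Y -> CSHom (eps X) (eps Y).
Hypothesis Free_spec : is_Free_map Free.

Lemma Free_proper (X Y : Setoid) (f g : Fun X Y) :
  fun_eq f g -> fun_eq (proj1_sig (Free X Y f)) (proj1_sig (Free X Y g)).
Proof.
  intros Hfg x.
  etransitivity; [apply (Free_spec X Y f x) |].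
  etransitivity; [apply seq_ind_eq, (Hfg x) |].
  symmetry. apply (Free_spec X Y g x).
Qed.

Lemma Free_id (X : Setoid) :
  fun_eq (proj1_sig (Free X X (fid X))) (fid (epsS X)).
Proof. intros x. apply (Free_spec X X (fid X) x). Qed.

Lemma Free_comp (X Y W : Setoid) (f : Fun X Y) (g : Fun Y W) :
  fun_eq (proj1_sig (Free X W (fcomp g f)))
         (fcomp (proj1_sig (Free Y W g)) (proj1_sig (Free X Y f))).
Proof.
  intros x.
  etransitivity; [apply (Free_spec X W (fcomp g f) x) |].
  symmetry.
  transitivity (proj1_sig (Free Y W g) (f x)).
  - apply (app_proper (proj1_sig (Free Y W g))), (Free_spec X Y f x).
  - apply (Free_spec Y W g (f x)).
Qed.

Definition restrict (X : Setoid) (Y : CSSet) (g : CSHom (eps X) Y) :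
  Fun X (cs_set Y) := fcomp (proj1_sig g) (iX X).

Lemma restrict_natural_in_X (X' X : Setoid) (Y : CSSet) (f : Fun X' X)
  (g : CSHom (eps X) Y) :
  fun_eq (restrict X' Y (cs_comp g (Free X' X f))) (fcomp (restrict X Y g) f).
Proof. intros x. apply (app_proper (proj1_sig g)), (Free_spec X' X f x). Qed.

Lemma restrict_natural_in_Y (X : Setoid) (Y Y' : CSSet) (k : CSHom Y Y')
  (g : CSHom (eps X) Y) :
  fun_eq (restrict X Y' (cs_comp k g)) (fcomp (proj1_sig k) (restrict X Y g)).
Proof. intros x. reflexivity. Qed.

End FreeFunctor.

Theorem theorem5p2 :
  (* (i) the identity assignment i_X is a function *)
  (forall (X : Setoid) (x y : X), seq X x y -> seq (epsS X) x y) /\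
  (* (i) universal property of εX *)
  (forall (X : Setoid) (Y : CSSet) (h : Fun X (cs_set Y)),
     exists eh : CSHom (eps X) Y,
       fun_eq (fcomp (proj1_sig eh) (iX X)) h /\
       (forall g : CSHom (eps X) Y,
          fun_eq (fcomp (proj1_sig g) (iX X)) h ->
          fun_eq (proj1_sig g) (proj1_sig eh))) /\
  (* (ii) the identity assignment εX -> X is a surjective strongly
     extensional function, for every completely separated set *)
  (forall Z : CSSet,
     exists p : CSHom (eps (cs_set Z)) Z,
       (forall x, proj1_sig p x = x) /\
       (forall y : cs_set Z, exists x, seq (cs_set Z) (proj1_sig p x) y)) /\
  (* (iii) Free is well defined on arrows ... *)
  (exists Free : forall X Y : Setoid, Fun X Y -> CSHom (eps X) (eps Y),
     is_Free_map Free) /\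
  (forall Free : forall X Y : Setoid, Fun X Y -> CSHom (eps X) (eps Y),
     is_Free_map Free ->
     (* ... is a functor Set -> SetComplSep ... *)
     (forall (X Y : Setoid) (f g : Fun X Y),
        fun_eq f g -> fun_eq (proj1_sig (Free X Y f)) (proj1_sig (Free X Y g))) /\
     (forall X : Setoid, fun_eq (proj1_sig (Free X X (fid X))) (fid (epsS X))) /\
     (forall (X Y W : Setoid) (f : Fun X Y) (g : Fun Y W),
        fun_eq (proj1_sig (Free X W (fcomp g f)))
               (fcomp (proj1_sig (Free Y W g)) (proj1_sig (Free X Y f)))) /\
     (* ... and is left adjoint to Frg: a natural bijection
        SetComplSep(Free X, Y) ≅ Set(X, Frg Y) *)
     exists (Phi : forall (X : Setoid) (Y : CSSet), CSHom (eps X) Y -> Fun X (cs_set Y))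
            (Psi : forall (X : Setoid) (Y : CSSet), Fun X (cs_set Y) -> CSHom (eps X) Y),
       (forall X Y (g g' : CSHom (eps X) Y),
          fun_eq (proj1_sig g) (proj1_sig g') -> fun_eq (Phi X Y g) (Phi X Y g')) /\
       (forall X Y (h h' : Fun X (cs_set Y)),
          fun_eq h h' -> fun_eq (proj1_sig (Psi X Y h)) (proj1_sig (Psi X Y h'))) /\
       (forall X Y (g : CSHom (eps X) Y),
          fun_eq (proj1_sig (Psi X Y (Phi X Y g))) (proj1_sig g)) /\
       (forall X Y (h : Fun X (cs_set Y)), fun_eq (Phi X Y (Psi X Y h)) h) /\
       (forall (X' X : Setoid) (Y : CSSet) (f : Fun X' X) (g : CSHom (eps X) Y),
          fun_eq (Phi X' Y (cs_comp g (Free X' X f))) (fcomp (Phi X Y g) f)) /\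
       (forall (X : Setoid) (Y Y' : CSSet) (k : CSHom Y Y') (g : CSHom (eps X) Y),
          fun_eq (Phi X Y' (cs_comp k g)) (fcomp (proj1_sig k) (Phi X Y g)))).
Proof.
  split; [exact seq_ind_eq |].
  split.
  { intros X Y h. exists (lift X Y h).
    split; [apply lift_comp_iX | apply lift_unique]. }
  split.
  { intros Z. exists (quotient_map Z).
    split; [reflexivity | intros y; exists y; reflexivity]. }
  split; [exists free_map; exact free_map_spec |].
  intros Free Free_spec.
  split; [exact (Free_proper Free Free_spec) |].
  split; [exact (Free_id Free Free_spec) |].
  split; [exact (Free_comp Free Free_spec) |].
  exists restrict, lift.
  split; [intros X Y g g' H x; exact (H x) |].
  split; [exact lift_proper |].
  split; [intros X Y g; apply eps_maps_determined_by_iX, lift_comp_iX |].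
  split; [exact lift_comp_iX |].
  split; [exact (restrict_natural_in_X Free Free_spec) |].
  exact restrict_natural_in_Y.
Qed.
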